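(* Let $b\in\mathbb{N}\setminus\{1\}$, $\xi_m\in\{-1,+1\}$ ($m\in\mathbb{Z}_+$) arbitrary, $\phi:\mathbb{R}\to\mathbb{R}$ periodic with period $1$, vanishing on $\mathbb{Z}$, and H\''older continuous with exponent $\gamma\in(0,1]$, and $\psi:(0,\infty)\to(0,\infty)$ submultiplicative with $\psi(b^{-1})\in(0,1)$. Let $f(t)=\sum_{m=0}^\infty \xi_m\psi(b^{-m})\phi(b^mt)$, $t\in[0,1]$. Then for each $n\in\mathbb{N}$ and $p\ge1$, \[ V^{p,1}_n(f)=b^n\,\mathbb{E}\Big(\Big|\sum_{m=1}^n\xi_{n-m}\psi(b^{m-n})b^{-m}Y_m\Big|^p\Big). \] If in addition $\psi$ is multiplicative, then for each $n\in\mathbb{N}$ and $p\ge1$, \[ V^{p,1}_n(f)=\big((\psi(b^{-1}))^pb\big)^n\,\mathbb{E}\Big(\Big|\sum_{m=1}^n\xi_{n-m}(\psi(b^{-1})b)^{-m}Y_m\Big|^p\Big). \]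
   Context: $\psi$ submultiplicative: $\psi(xy)\le\psi(x)\psi(y)$ for $x,y>0$; multiplicative: equality holds. For a function $g$ on $[0,1]$ (extended by $g(s):=g(1)$ for $s>1$), $t\in[0,1]$, $n\in\mathbb{N}$, $p\ge1$: $V^{p,t}_n(g):=\sum_{k=0}^{\lfloor tb^n\rfloor}|g((k+1)b^{-n})-g(kb^{-n})|^p$. For $m\in\mathbb{N}$, $k\in\{0,\dots,b^m-1\}$ let $\lambda_{m,k}:=b^m(\phi((k+1)b^{-m})-\phi(kb^{-m}))$. Let $(U_n)_{n\in\mathbb{N}}$ be i.i.d. random variables uniformly distributed on $\{0,1,\dots,b-1\}$, and for $m\in\mathbb{N}$ let $R_m:=\sum_{i=1}^m U_ib^{i-1}$ and $Y_m:=\lambda_{m,R_m}$. *)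

From HB Require Import structures.
From mathcomp Require Import all_boot all_order all_algebra.
From mathcomp Require Import all_classical all_reals all_analysis.
Set Implicit Arguments. Unset Strict Implicit. Unset Printing Implicit Defensive.
Import Order.TTheory GRing.Theory Num.Theory.
Local Open Scope ring_scope.

Section Defs.
Context {R : realType}.

Definition psi_submultiplicative (psi : R -> R) : Prop :=
  forall x y : R, 0 < x -> 0 < y -> psi (x * y) <= psi x * psi y.
Definition psi_multiplicative (psi : R -> R) : Prop :=
  forall x y : R, 0 < x -> 0 < y -> psi (x * y) = psi x * psi y.

Definition extend1 (g : R -> R) (s : R) : R := if 1 < s then g 1 else g s.

Definition Vpt (b n : nat) (p t : R) (g : R -> R) : R :=
  \sum_(0 <= k < (Num.truncn (t * b%:R ^+ n)).+1)
     `| extend1 g (k.+1%:R / b%:R ^+ n) - extend1 g (k%:R / b%:R ^+ n) | `^ p.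

Definition lambda (b : nat) (phi : R -> R) (m k : nat) : R :=
  b%:R ^+ m * (phi (k.+1%:R / b%:R ^+ m) - phi (k%:R / b%:R ^+ m)).

Definition fser (b : nat) (xi : nat -> R) (psi phi : R -> R) (t : R) : R :=
  limn (fun N => \sum_(0 <= m < N) xi m * psi (b%:R ^+ m)^-1 * phi (b%:R ^+ m * t)).

(* Canonical model of i.i.d. uniform U_1,...,U_n on {0,...,b-1}: the sample
   space {ffun 'I_n -> 'I_b} with the uniform probability; U_i(w) = w (i-1). *)
Definition Ucoord (n b : nat) (w : {ffun 'I_n -> 'I_b}) (i : nat) : nat :=
  if i is j.+1 then
    (match (insub j : option 'I_n) with Some k => nat_of_ord (w k) | None => 0%N end)
  else 0%N.

Definition Rdig (n b : nat) (w : {ffun 'I_n -> 'I_b}) (m : nat) : nat :=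
  (\sum_(1 <= i < m.+1) Ucoord w i * b ^ i.-1)%N.

Definition Yrv (n b : nat) (phi : R -> R) (w : {ffun 'I_n -> 'I_b}) (m : nat) : R :=
  lambda b phi m (Rdig w m).

Definition Expect (n b : nat) (X : {ffun 'I_n -> 'I_b} -> R) : R :=
  (#|{ffun 'I_n -> 'I_b}|%:R)^-1 * \sum_(w : {ffun 'I_n -> 'I_b}) X w.

End Defs.

(** At a grid point [k b^-n] the series defining [f] is a finite sum: [phi] is
    1-periodic and vanishes on the integers, so the terms with [m >= n] vanish
    and the term of index [m] only depends on [k mod b^(n-m)].  Hence every
    increment of [f] over [[k b^-n, (k+1) b^-n]] is an explicit combination of
    the [lambda_{j, k mod b^j}], [1 <= j <= n].  As [k] runs over
    [0 .. b^n - 1], its [n] base-[b] digits run over all of [{0..b-1}^n], i.e.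
    over the sample space of [U_1, ..., U_n], with [k mod b^j = R_j]; so the sum
    over [k] is [b^n] times an expectation.  In the multiplicative case
    [psi(b^(j-n)) = psi(b^-1)^(n-j)] and the common factor [psi(b^-1)^n] leaves
    the absolute value.  The Hoelder, sign, submultiplicativity and
    [psi(b^-1) < 1] hypotheses only make the series converge off the grid. *)

From HB Require Import structures.
From mathcomp Require Import all_boot all_order all_algebra.
From mathcomp Require Import all_classical all_reals all_analysis.
From mathcomp Require Import zify ring.
Set Implicit Arguments. Unset Strict Implicit. Unset Printing Implicit Defensive.
Import Order.TTheory GRing.Theory Num.Theory.
Local Open Scope ring_scope.

Section DigitExpansion.
Variables (n b : nat).
Hypothesis b_gt0 : (0 < b)%N.
Implicit Type w : {ffun 'I_n -> 'I_b}.

Lemma RdigS w m : Rdig w m.+1 = (Rdig w m + Ucoord w m.+1 * b ^ m)%N.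
Proof. by rewrite /Rdig big_nat_recr. Qed.

Lemma Ucoord_lt w i : (Ucoord w i < b)%N.
Proof. by case: i => [|i] //=; case: insub. Qed.

Lemma Ucoord_ord w (i : 'I_n) : Ucoord w i.+1 = w i.
Proof. by rewrite /Ucoord valK. Qed.

Lemma Rdig_lt w m : (Rdig w m < b ^ m)%N.
Proof.
elim: m => [|m IHm]; first by rewrite /Rdig big_geq.
have := Ucoord_lt w m.+1; have : (0 < b ^ m)%N by rewrite expn_gt0 b_gt0.
rewrite RdigS expnS; nia.
Qed.

Lemma Rdig_modX w m k : (m <= k)%N -> (Rdig w k %% b ^ m)%N = Rdig w m.
Proof.
move=> /subnKC <-; elim: (k - m)%N => [|i IHi].
  by rewrite addn0 modn_small ?Rdig_lt.
by rewrite addnS RdigS expnD mulnA mulnAC addnC modnMDl IHi.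
Qed.

Lemma Rdig_inj : injective (fun w => Rdig w n).
Proof.
move=> w w' /= eq_wn; apply/ffunP => i.
have eq_w (m : nat) : (m <= n)%N -> Rdig w m = Rdig w' m.
  by move=> le_mn; rewrite -(Rdig_modX w le_mn) -(Rdig_modX w' le_mn) eq_wn.
have := eq_w i.+1 (ltn_ord i); rewrite !RdigS (eq_w i (ltnW (ltn_ord i))).
move/eqP; rewrite eqn_add2l eqn_pmul2r ?expn_gt0 ?b_gt0 // !Ucoord_ord.
by move/eqP/val_inj.
Qed.

Lemma sum_Rdig (V : nmodType) (F : nat -> V) :
  \sum_(w : {ffun 'I_n -> 'I_b}) F (Rdig w n) = \sum_(0 <= k < b ^ n) F k.
Proof.
pose g w : 'I_(b ^ n) := Ordinal (Rdig_lt w n).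
have g_bij : bijective g.
  apply: inj_card_bij; first by move=> w w' /(congr1 val) /Rdig_inj.
  by rewrite card_ffun !card_ord.
by rewrite big_mkord (reindex g) //; exact: onW_bij.
Qed.

Lemma Expect_Rdig (R : realType) (F : nat -> R) :
  b%:R ^+ n * Expect (fun w => F (Rdig w n)) = \sum_(0 <= k < b ^ n) F k.
Proof.
by rewrite /Expect card_ffun !card_ord natrX mulrA mulfV ?mul1r ?sum_Rdig //
  expf_neq0 // pnatr_eq0 -lt0n.
Qed.

Lemma ExpectZl (R : realType) (a : R) (X : {ffun 'I_n -> 'I_b} -> R) :
  Expect (fun w => a * X w) = a * Expect X.
Proof. by rewrite /Expect -mulr_sumr mulrCA. Qed.

End DigitExpansion.

Section PeriodicIncrements.
Variables (R : realType) (phi : R -> R).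
Hypothesis phi_periodic : forall x : R, phi (x + 1) = phi x.
Hypothesis phi_int : forall z : int, phi z%:~R = 0.

Lemma phiDn x q : phi (x + q%:R) = phi x.
Proof. by elim: q => [|q IHq]; rewrite ?addr0 // -addn1 natrD addrA phi_periodic. Qed.

Lemma phi_nat q : phi q%:R = 0.
Proof. by rewrite -[q%:R]add0r phiDn -[0]/(0%:~R) phi_int. Qed.

Lemma phi_modn d k : (0 < d)%N -> phi (k%:R / d%:R) = phi ((k %% d)%:R / d%:R).
Proof.
move=> d_gt0; rewrite {1}(divn_eq k d) natrD natrM mulrDl mulfK; last first.
  by rewrite pnatr_eq0 -lt0n.
by rewrite addrC phiDn.
Qed.

Lemma lambda_modX b m k : (0 < b)%N -> lambda b phi m k = lambda b phi m (k %% b ^ m).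
Proof.
move=> b_gt0; have bm_gt0 : (0 < b ^ m)%N by rewrite expn_gt0 b_gt0.
rewrite /lambda -natrX; congr (_ * (_ - _)).
  by rewrite phi_modn // [RHS]phi_modn // -[in RHS]addn1 modnDml addn1.
by rewrite phi_modn // [RHS]phi_modn // modn_mod.
Qed.

Lemma Yrv_Rdig n b (w : {ffun 'I_n -> 'I_b}) m : (0 < b)%N -> (m <= n)%N ->
  Yrv phi w m = lambda b phi m (Rdig w n).
Proof. by move=> b_gt0 le_mn; rewrite (lambda_modX _ _ b_gt0) Rdig_modX. Qed.

End PeriodicIncrements.

(* [Vpt] sums up to [k = b^n] inclusive; that last increment vanishes since
   [extend1] freezes [g] beyond 1. *)
Lemma Vpt1E (R : realType) b n (p : R) (g : R -> R) : (0 < b)%N -> p != 0 ->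
  Vpt b n p 1 g =
    \sum_(0 <= k < b ^ n) `|g (k.+1%:R / b%:R ^+ n) - g (k%:R / b%:R ^+ n)| `^ p.
Proof.
move=> b_gt0 p_neq0; have bn_gt0 : (0 : R) < (b ^ n)%:R by rewrite ltr0n expn_gt0 b_gt0.
have extend1_grid k : (k <= b ^ n)%N -> extend1 g (k%:R / (b ^ n)%:R) = g (k%:R / (b ^ n)%:R).
  by move=> le_k; rewrite /extend1 ltNge ler_pdivrMr // mul1r ler_nat le_k.
rewrite /Vpt mul1r -!natrX natrK big_nat_recr //=.
have -> : extend1 g ((b ^ n).+1%:R / (b ^ n)%:R) = extend1 g ((b ^ n)%:R / (b ^ n)%:R).
  by rewrite /extend1 mulfV ?gt_eqF // ltxx ltr_pdivlMr // mul1r ltr_nat ltnSn.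
rewrite subrr normr0 powR0 // addr0; apply: eq_big_nat => k /andP[_ lt_k].
by rewrite !extend1_grid // ltnW.
Qed.

Lemma powR_exprn (R : realType) (x p : R) k : 0 <= x -> (x ^+ k) `^ p = (x `^ p) ^+ k.
Proof. by move=> x_ge0; rewrite -powR_mulrn // powRAC powR_mulrn ?powR_ge0. Qed.

Lemma psi_multiplicativeX (R : realType) (psi : R -> R) (x : R) k :
  psi_multiplicative psi -> psi 1 != 0 -> 0 < x -> psi (x ^+ k) = psi x ^+ k.
Proof.
move=> psiM psi1_neq0 x_gt0.
have psi1 : psi 1 = 1 by apply: (mulfI psi1_neq0); rewrite mulr1 -psiM ?mulr1 ?ltr01.
elim: k => [|k IHk]; first by rewrite !expr0.
by rewrite !exprS psiM ?exprn_gt0 // IHk.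
Qed.

Section GridValues.
Variables (R : realType) (b : nat) (xi : nat -> R) (psi phi : R -> R).
Hypothesis b_gt0 : (0 < b)%N.
Hypothesis phi_periodic : forall x : R, phi (x + 1) = phi x.
Hypothesis phi_int : forall z : int, phi z%:~R = 0.

Let bX_neq0 j : (b%:R : R) ^+ j != 0.
Proof. by rewrite expf_neq0 // pnatr_eq0 -lt0n. Qed.

Lemma fser_grid n x : fser b xi psi phi (x%:R / b%:R ^+ n) =
  \sum_(0 <= m < n) xi m * psi (b%:R ^+ m)^-1 * phi (x%:R / b%:R ^+ (n - m)).
Proof.
rewrite /fser; set u := fun N => _.
have -> : \sum_(0 <= m < n) xi m * psi (b%:R ^+ m)^-1 * phi (x%:R / b%:R ^+ (n - m)) = u n.
  apply: eq_big_nat => m /andP[_ lt_mn]; congr (_ * phi _).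
  by rewrite -[in RHS](subnKC (ltnW lt_mn)) exprD invfM; field; rewrite !bX_neq0.
apply: norm_lim_near_cst; near=> N.
have le_nN : (n <= N)%N by near: N; exists n.
rewrite /u (big_cat_nat (leq0n n) le_nN) /= [X in _ + X]big_nat_cond [X in _ + X]big1 ?addr0 //.
move=> m /andP[/andP[le_nm _] _].
have -> : (b%:R : R) ^+ m * (x%:R / b%:R ^+ n) = (b ^ (m - n) * x)%:R.
  by rewrite natrM natrX -{1}(subnKC le_nm) exprD; field; rewrite bX_neq0.
by rewrite phi_nat ?mulr0.
Unshelve. all: end_near.
Qed.

Lemma fser_increment n k :
  fser b xi psi phi (k.+1%:R / b%:R ^+ n) - fser b xi psi phi (k%:R / b%:R ^+ n) =
  \sum_(1 <= m < n.+1)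
     xi (n - m)%N * psi (b%:R ^+ (n - m))^-1 * (b%:R ^+ m)^-1 * lambda b phi m k.
Proof.
rewrite !fser_grid -sumrB big_add1 /= big_nat_rev /=.
apply: eq_big_nat => i /andP[_ lt_in]; rewrite add0n subKn // /lambda.
by field; rewrite bX_neq0.
Qed.

Lemma Vpt_fser n (p : R) : p != 0 ->
  Vpt b n p 1 (fser b xi psi phi) =
    b%:R ^+ n * Expect (fun w : {ffun 'I_n -> 'I_b} =>
      `| \sum_(1 <= m < n.+1)
           xi (n - m)%N * psi (b%:R ^+ (n - m))^-1 * (b%:R ^+ m)^-1
           * Yrv phi w m | `^ p).
Proof.
move=> p_neq0; rewrite Vpt1E // -Expect_Rdig //; congr (_ * Expect _).
apply/funext => w; rewrite fser_increment; congr (`| _ | `^ p).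
by apply: eq_big_nat => m /andP[_ le_mn]; rewrite Yrv_Rdig.
Qed.

Lemma Vpt_fser_multiplicative n (p : R) : p != 0 ->
  (forall x : R, 0 < x -> 0 < psi x) -> psi_multiplicative psi ->
  Vpt b n p 1 (fser b xi psi phi) =
    (psi (b%:R)^-1 `^ p * b%:R) ^+ n * Expect (fun w : {ffun 'I_n -> 'I_b} =>
      `| \sum_(1 <= m < n.+1)
           xi (n - m)%N * ((psi (b%:R)^-1 * b%:R) ^+ m)^-1 * Yrv phi w m | `^ p).
Proof.
move=> p_neq0 psi_gt0 psiM; set q := psi (b%:R)^-1.
have binv_gt0 : (0 : R) < (b%:R)^-1 by rewrite invr_gt0 ltr0n.
have q_gt0 : 0 < q by exact: psi_gt0.
have psiX k : psi ((b%:R)^-1 ^+ k) = q ^+ k.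
  by apply: psi_multiplicativeX => //; rewrite gt_eqF ?psi_gt0 ?ltr01.
rewrite Vpt_fser // exprMn -mulrA [in RHS]mulrCA -[in RHS]ExpectZl.
congr (_ * Expect _); apply/funext => w.
rewrite -powR_exprn ?ltW // -(ger0_norm (exprn_ge0 n (ltW q_gt0))).
rewrite -powRM ?normr_ge0 // -normrM mulr_sumr; congr (`| _ | `^ p).
apply: eq_big_nat => m /andP[_]; rewrite ltnS => le_mn.
have -> : q ^+ n = q ^+ m * q ^+ (n - m) by rewrite -exprD subnKC.
rewrite -[(b%:R ^+ (n - m))^-1]exprVn psiX.
rewrite exprMn invfM; field.
by rewrite !expf_neq0 ?gt_eqF // ltr0n.
Qed.

End GridValues.

Theorem lemma2p4 (R : realType) (b : nat) (xi : nat -> R) (phi psi : R -> R)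
  (gamma : R) :
  (2 <= b)%N ->
  (forall m : nat, xi m = 1 \/ xi m = -1) ->
  (forall x : R, phi (x + 1) = phi x) ->
  (forall z : int, phi z%:~R = 0) ->
  0 < gamma <= 1 ->
  (exists C : R, forall x y : R, `|phi x - phi y| <= C * `|x - y| `^ gamma) ->
  (forall x : R, 0 < x -> 0 < psi x) ->
  psi_submultiplicative psi ->
  0 < psi (b%:R)^-1 < 1 ->
  (forall (n : nat) (p : R), (0 < n)%N -> 1 <= p ->
     Vpt b n p 1 (fser b xi psi phi) =
       b%:R ^+ n * Expect (fun w : {ffun 'I_n -> 'I_b} =>
         `| \sum_(1 <= m < n.+1)
              xi (n - m)%N * psi (b%:R ^+ (n - m))^-1 * (b%:R ^+ m)^-1
              * Yrv phi w m | `^ p))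
  /\
  (psi_multiplicative psi ->
   forall (n : nat) (p : R), (0 < n)%N -> 1 <= p ->
     Vpt b n p 1 (fser b xi psi phi) =
       (psi (b%:R)^-1 `^ p * b%:R) ^+ n * Expect (fun w : {ffun 'I_n -> 'I_b} =>
         `| \sum_(1 <= m < n.+1)
              xi (n - m)%N * ((psi (b%:R)^-1 * b%:R) ^+ m)^-1
              * Yrv phi w m | `^ p)).
Proof.
move=> b_ge2 _ phi_periodic phi_int _ _ psi_gt0 _ _.
have b_gt0 : (0 < b)%N by exact: ltnW.
have ge1_neq0 (p : R) : 1 <= p -> p != 0.
  by move=> p_ge1; rewrite gt_eqF // (lt_le_trans ltr01).
split=> [n p _ /ge1_neq0 p_neq0 | psiM n p _ /ge1_neq0 p_neq0].
  exact: Vpt_fser.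
exact: Vpt_fser_multiplicative.
Qed.
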